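(* Let $E$ be a finite set and $\mathcal{A}$ a set-arrangement on $E$. For each $A\in\mathcal{A}$ let $R_A\subseteq[\mathcal{F}(A),\mathcal{F}(A)]$ and $L_A=\mathcal{F}(A)/\langle R_A\rangle$. Let $\mathcal{L}=\mathcal{F}(E)/\langle R\rangle$, where $$R=\bigcup_{A\in\mathcal{A}}R_A\ \cup\ \{[x,y]:\ x,y\in E,\ \{x,y\}\not\subseteq A \text{ for every } A\in\mathcal{A}\}.$$ For $A\in\mathcal{A}$ let $\pi_A:\mathcal{L}\to L_A$ be the Lie homomorphism sending each $x\in E\setminus A$ to $0$ and each $x\in A$ to itself, and let $s_A:L_A\to\mathcal{L}$ be the Lie homomorphism induced by the inclusion $A\subseteq E$ (so $\pi_A\circ s_A=\mathrm{id}_{L_A}$). Let $\pi_A'$ and $s_A'$ denote the restrictions to the derived algebras $\mathcal{L}'=[\mathcal{L},\mathcal{L}]$ and $L_A'=[L_A,L_A]$, and let $I$ be the kernel of the surjective Lie homomorphism $\pi=\bigoplus_{A\in\mathcal{A}}\pi_A':\mathcal{L}'\to\bigoplus_{A\in\mathcal{A}}L_A'$. Then $I=0$ if and only if $[x,s_A'(L_A')]=0$ in $\mathcal{L}$ for all $A\in\mathcal{A}$ and all $x\in E\setminus A$.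
   Context: All Lie algebras are over a fixed field. $\mathcal{F}(X)$ denotes the free Lie algebra on a set $X$, and $\langle S\rangle$ the ideal generated by $S$. A set-arrangement on a finite set $E$ is a set $\mathcal{A}$ of subsets of $E$ such that $|A|\ge 3$ for all $A\in\mathcal{A}$ and $|A\cap B|\le 1$ for all distinct $A,B\in\mathcal{A}$. In the claim, elements $x\in E$ are identified with their images in $\mathcal{L}$. *)

From mathcomp Require Import all_boot all_algebra.
Set Implicit Arguments. Unset Strict Implicit. Unset Printing Implicit Defensive.
Import GRing.Theory.
Local Open Scope ring_scope.

Inductive lterm (K : Type) (X : Type) : Type :=
| LVar of X
| LZero
| LAdd of lterm K X & lterm K X
| LScale of K & lterm K X
| LBr of lterm K X & lterm K X.
Arguments LVar {K X} x.
Arguments LZero {K X}.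
Arguments LAdd {K X} t u.
Arguments LScale {K X} k t.
Arguments LBr {K X} t u.

Fixpoint lsubst (K : Type) (X Y : Type) (f : X -> lterm K Y) (t : lterm K X) : lterm K Y :=
  match t with
  | LVar x => f x
  | LZero => LZero
  | LAdd t u => LAdd (lsubst f t) (lsubst f u)
  | LScale k t => LScale k (lsubst f t)
  | LBr t u => LBr (lsubst f t) (lsubst f u)
  end.

(* Congruence on terms whose quotient is F(X)/<Rel>: Lie algebra axioms over K,
   compatibility with operations, and the relations r ~ 0 for r in Rel
   (the ideal closure follows from compatibility with brackets). *)
Inductive lcong (K : fieldType) (X : Type) (Rel : lterm K X -> Prop)
  : lterm K X -> lterm K X -> Prop :=
| lc_refl t : lcong Rel t t
| lc_sym t u : lcong Rel t u -> lcong Rel u t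
| lc_trans t u v : lcong Rel t u -> lcong Rel u v -> lcong Rel t v
| lc_add t t' u u' : lcong Rel t t' -> lcong Rel u u' -> lcong Rel (LAdd t u) (LAdd t' u')
| lc_scale k t t' : lcong Rel t t' -> lcong Rel (LScale k t) (LScale k t')
| lc_br t t' u u' : lcong Rel t t' -> lcong Rel u u' -> lcong Rel (LBr t u) (LBr t' u')
| lc_addA t u v : lcong Rel (LAdd t (LAdd u v)) (LAdd (LAdd t u) v)
| lc_addC t u : lcong Rel (LAdd t u) (LAdd u t)
| lc_add0 t : lcong Rel (LAdd t LZero) t
| lc_scale1 t : lcong Rel (LScale 1 t) t
| lc_scale0 t : lcong Rel (LScale 0 t) LZero
| lc_scaleA k l t : lcong Rel (LScale k (LScale l t)) (LScale (k * l) t)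
| lc_scaleDr k t u : lcong Rel (LScale k (LAdd t u)) (LAdd (LScale k t) (LScale k u))
| lc_scaleDl k l t : lcong Rel (LScale (k + l) t) (LAdd (LScale k t) (LScale l t))
| lc_brDl t u v : lcong Rel (LBr (LAdd t u) v) (LAdd (LBr t v) (LBr u v))
| lc_brDr t u v : lcong Rel (LBr t (LAdd u v)) (LAdd (LBr t u) (LBr t v))
| lc_brZl k t u : lcong Rel (LBr (LScale k t) u) (LScale k (LBr t u))
| lc_brZr k t u : lcong Rel (LBr t (LScale k u)) (LScale k (LBr t u))
| lc_brtt t : lcong Rel (LBr t t) LZero
| lc_jacobi t u v :
    lcong Rel (LAdd (LAdd (LBr t (LBr u v)) (LBr u (LBr v t))) (LBr v (LBr t u))) LZero
| lc_rel r : Rel r -> lcong Rel r LZero.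

(* terms that are linear combinations of brackets: they represent exactly the
   elements of the derived algebra [L, L] of any quotient L of the free Lie algebra *)
Inductive derived (K : Type) (X : Type) : lterm K X -> Prop :=
| der_zero : derived LZero
| der_add t u : derived t -> derived u -> derived (LAdd t u)
| der_scale k t : derived t -> derived (LScale k t)
| der_br t u : derived (LBr t u).

(* no relations: the free Lie algebra F(X) *)
Definition norel (K : Type) (X : Type) : lterm K X -> Prop := fun _ => False.

Definition in_derived_free (K : fieldType) (X : Type) (r : lterm K X) : Prop :=
  exists t, derived t /\ lcong (@norel K X) r t.

Definition set_arrangement (E : finType) (Ar : {set {set E}}) : Prop :=
  (forall A, A \in Ar -> 3 <= #|A|)%N /\
  (forall A B, A \in Ar -> B \in Ar -> A != B -> #|A :&: B| <= 1)%N.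

Definition elems (E : finType) (A : {set E}) : Type := {x : E | x \in A}.

Definition sA (K : Type) (E : finType) (A : {set E}) (t : lterm K (elems A)) : lterm K E :=
  lsubst (fun x : elems A => LVar (sval x)) t.

Definition piA_var (K : Type) (E : finType) (A : {set E}) (x : E) : lterm K (elems A) :=
  match boolP (x \in A) with
  | AltTrue h => LVar (exist _ x h)
  | AltFalse _ => LZero
  end.

Definition piA (K : Type) (E : finType) (A : {set E}) (t : lterm K E) : lterm K (elems A) :=
  lsubst (@piA_var K E A) t.

Definition Rtot (K : Type) (E : finType) (Ar : {set {set E}})
  (RA : forall A : {set E}, lterm K (elems A) -> Prop) (r : lterm K E) : Prop :=
  (exists2 A, A \in Ar & exists2 r', RA A r' & r = sA r') \/
  (exists x y : E, (forall A, A \in Ar -> ~ (x \in A /\ y \in A)) /\ r = LBr (LVar x) (LVar y)).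

From mathcomp Require Import all_boot all_algebra.
From Stdlib Require Import Setoid Morphisms.
Set Implicit Arguments. Unset Strict Implicit. Unset Printing Implicit Defensive.
Import GRing.Theory.
Local Open Scope ring_scope.

(* For A != B in the arrangement, |A ∩ B| <= 1, so pi_B sends the generators
   of s_A(L_A) into a line, an abelian subalgebra; hence pi_B kills s_A(L_A').
   With pi_A ∘ s_A = id this gives pi_B (s_A w) = w if B = A and 0 otherwise
   for w in L_A'.  So [x, s_A t] with x ∉ A lies in I, which gives one
   direction.  Conversely, under the centralising hypothesis the subspace
   sum_A s_A(L_A') is an ideal of L: bracketing s_A w with a generator x gives
   s_A [x, w] if x ∈ A and 0 otherwise.  It contains every [x, y] (either x, y
   lie in a common A, or [x, y] is a relation), so it is all of L'.  Writing
   z ∈ I as sum_A s_A w_A and projecting shows that each w_B is 0 in L_B. *)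

#[export] Instance lcong_equiv (K : fieldType) (X : Type) (Rel : lterm K X -> Prop) :
  Equivalence (lcong Rel).
Proof. split; [exact: lc_refl | exact: lc_sym | exact: lc_trans]. Qed.

#[export] Instance LAdd_proper (K : fieldType) (X : Type) (Rel : lterm K X -> Prop) :
  Proper (lcong Rel ==> lcong Rel ==> lcong Rel) (@LAdd K X).
Proof. by move=> ? ? ? ? ? ?; apply: lc_add. Qed.

#[export] Instance LBr_proper (K : fieldType) (X : Type) (Rel : lterm K X -> Prop) :
  Proper (lcong Rel ==> lcong Rel ==> lcong Rel) (@LBr K X).
Proof. by move=> ? ? ? ? ? ?; apply: lc_br. Qed.

#[export] Instance LScale_proper (K : fieldType) (X : Type) (Rel : lterm K X -> Prop) k :
  Proper (lcong Rel ==> lcong Rel) (@LScale K X k).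
Proof. by move=> ? ? ?; apply: lc_scale. Qed.

#[export] Hint Resolve lc_refl : core.

Section LieIdentities.

Variables (K : fieldType) (X : Type) (Rel : lterm K X -> Prop).

Lemma ladd0l t : lcong Rel (LAdd LZero t) t.
Proof. by rewrite lc_addC; apply: lc_add0. Qed.

Lemma lscaler0 k : lcong Rel (LScale k LZero) LZero.
Proof.
rewrite -{1}(lc_scale0 Rel LZero) lc_scaleA mulr0.
exact: lc_scale0.
Qed.

Lemma lbr0l u : lcong Rel (LBr LZero u) LZero.
Proof. by rewrite -{1}(lc_scale0 Rel u) lc_brZl; apply: lc_scale0. Qed.

Lemma lbr0r u : lcong Rel (LBr u LZero) LZero.
Proof. by rewrite -{1}(lc_scale0 Rel u) lc_brZr; apply: lc_scale0. Qed.

Lemma laddACA a b c d :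
  lcong Rel (LAdd (LAdd a b) (LAdd c d)) (LAdd (LAdd a c) (LAdd b d)).
Proof.
by rewrite -lc_addA (lc_addA Rel b) (lc_addC Rel b c) -(lc_addA Rel c) lc_addA.
Qed.

Lemma ladd_eq0 a b : lcong Rel (LAdd a b) LZero -> lcong Rel a (LScale (-1) b).
Proof.
move=> ab0.
have bNb : lcong Rel (LAdd b (LScale (-1) b)) LZero.
  by rewrite -{1}(lc_scale1 Rel b) -lc_scaleDl subrr; apply: lc_scale0.
by rewrite -[a]lc_add0 -bNb lc_addA ab0 ladd0l.
Qed.

Lemma lbr_anti t u : lcong Rel (LBr t u) (LScale (-1) (LBr u t)).
Proof.
apply: ladd_eq0.
have := lc_brtt Rel (LAdd t u).
by rewrite lc_brDl !lc_brDr !lc_brtt ladd0l lc_add0.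
Qed.

Lemma lbr_jacobi a b z :
  lcong Rel (LBr (LBr a b) z) (LAdd (LBr a (LBr b z)) (LBr b (LBr z a))).
Proof.
have jac := lc_jacobi Rel a b z; rewrite lc_addC in jac; move/ladd_eq0: jac => jac.
by rewrite lbr_anti jac lc_scaleA mulrNN mulr1 lc_scale1.
Qed.

End LieIdentities.

Section Substitution.

Variables (K : Type) (X Y : Type).

Lemma lsubst_comp (Z : Type) (f : X -> lterm K Y) (g : Y -> lterm K Z) t :
  lsubst g (lsubst f t) = lsubst (fun x => lsubst g (f x)) t.
Proof. by elim: t => //= *; f_equal. Qed.

Lemma eq_lsubst (f g : X -> lterm K Y) : f =1 g -> lsubst f =1 lsubst g.
Proof. by move=> fg; elim=> //= *; f_equal. Qed.

Lemma lsubst_var (t : lterm K X) : lsubst LVar t = t.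
Proof. by elim: t => //= *; f_equal. Qed.

End Substitution.

Section SubstitutionCongruence.

Variables (K : fieldType) (X Y : Type).

Lemma lsubst_cong (Rel : lterm K X -> Prop) (Rel' : lterm K Y -> Prop)
    (f : X -> lterm K Y) :
  (forall r, Rel r -> lcong Rel' (lsubst f r) LZero) ->
  forall t u, lcong Rel t u -> lcong Rel' (lsubst f t) (lsubst f u).
Proof.
move=> fRel t u; elim=> /=; intros;
  solve [constructor; auto | econstructor; eauto | auto].
Qed.

Variables (Rel : lterm K Y -> Prop) (f : X -> lterm K Y) (g : lterm K Y).
Hypothesis f_line : forall x, f x = LZero \/ f x = g.

Lemma lsubst_line t : exists c, lcong Rel (lsubst f t) (LScale c g).
Proof.
elim: t => /= [x||t [c tc] u [d ud]|k t [c tc]|t [c tc] u [d ud]].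
- by case: (f_line x) => ->; [exists 0 | exists 1]; rewrite ?lc_scale0 ?lc_scale1.
- by exists 0; rewrite lc_scale0.
- by exists (c + d); rewrite tc ud lc_scaleDl.
- by exists (k * c); rewrite tc lc_scaleA.
- by exists 0; rewrite tc ud lc_brZl lc_brZr lc_brtt !lscaler0 lc_scale0.
Qed.

Lemma lsubst_line_derived t : derived t -> lcong Rel (lsubst f t) LZero.
Proof.
elim=> /= [|a b _ -> _ ->|k a _ ->|a b]; rewrite ?lc_add0 ?lscaler0 //.
have [c ->] := lsubst_line a; have [d ->] := lsubst_line b.
by rewrite lc_brZl lc_brZr lc_brtt !lscaler0.
Qed.

End SubstitutionCongruence.

Definition lsum (K X I : Type) (s : seq I) (f : I -> lterm K X) : lterm K X :=
  foldr (fun i acc => LAdd (f i) acc) LZero s.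

Lemma lsubst_lsum (K X Y I : Type) (g : X -> lterm K Y) (s : seq I) f :
  lsubst g (lsum s f) = lsum s (fun i => lsubst g (f i)).
Proof. by elim: s => //= i s <-. Qed.

Section FiniteSums.

Variables (K : fieldType) (X : Type) (Rel : lterm K X -> Prop).

Lemma eq_lsum (I : eqType) (s : seq I) f g :
  {in s, forall i, lcong Rel (f i) (g i)} -> lcong Rel (lsum s f) (lsum s g).
Proof.
elim: s => [|i s IHs] fg //=.
by rewrite (fg i (mem_head _ _)) IHs // => j sj; apply: fg; rewrite inE sj orbT.
Qed.

Lemma lsum_eq0 (I : eqType) (s : seq I) f :
  {in s, forall i, lcong Rel (f i) LZero} -> lcong Rel (lsum s f) LZero.
Proof.
move=> f0; rewrite (@eq_lsum _ _ _ (fun=> LZero)) //.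
by elim: s {f0} => //= _ s ->; rewrite lc_add0.
Qed.

Lemma lsum_single (I : eqType) (s : seq I) f a :
  uniq s -> a \in s -> {in s, forall i, i != a -> lcong Rel (f i) LZero} ->
  lcong Rel (lsum s f) (f a).
Proof.
elim: s => [|i s IHs] //= /andP[si us] sa f0.
have f0s : {in s, forall j, j != a -> lcong Rel (f j) LZero}.
  by move=> j sj; apply: f0; rewrite inE sj orbT.
case: (eqVneq i a) => [ia|ia].
  rewrite -ia lsum_eq0 ?lc_add0 // => j sj; apply: f0s => //.
  by apply: contraNneq si => ja; rewrite ia -ja.
rewrite (f0 i (mem_head _ _) ia) ladd0l IHs //.
by move: sa; rewrite inE eq_sym (negbTE ia).
Qed.

Lemma lsumD (I : Type) (s : seq I) f g :
  lcong Rel (lsum s (fun i => LAdd (f i) (g i))) (LAdd (lsum s f) (lsum s g)).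
Proof. by elim: s => [|i s /= ->]; [rewrite lc_add0 | rewrite laddACA]. Qed.

Lemma lsumZ (I : Type) (s : seq I) k f :
  lcong Rel (lsum s (fun i => LScale k (f i))) (LScale k (lsum s f)).
Proof. by elim: s => [|i s /= ->]; [rewrite lscaler0 | rewrite lc_scaleDr]. Qed.

Lemma lbr_lsumr (I : Type) (s : seq I) x f :
  lcong Rel (LBr x (lsum s f)) (lsum s (fun i => LBr x (f i))).
Proof. by elim: s => [|i s /= <-]; [rewrite lbr0r | rewrite lc_brDr]. Qed.

End FiniteSums.

Section Projections.

Variables (K : Type) (E : finType).

Lemma piA_var_notin (A : {set E}) x : x \notin A -> piA_var K A x = LZero.
Proof.
by move=> xA; rewrite /piA_var; destruct (boolP (x \in A)) as [xA'|] => //; rewrite xA' in xA.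
Qed.

Lemma sA_br (A : {set E}) (t u : lterm K (elems A)) : sA (LBr t u) = LBr (sA t) (sA u).
Proof. by []. Qed.

Lemma sA_piA_var (A : {set E}) x : x \in A -> sA (piA_var K A x) = LVar x.
Proof.
by move=> xA; rewrite /piA_var; destruct (boolP (x \in A)) as [|xA'] => //; rewrite xA in xA'.
Qed.

Lemma piA_var_val (A : {set E}) (a : elems A) : piA_var K A (sval a) = LVar a.
Proof.
case: a => x xA /=; rewrite /piA_var; destruct (boolP (x \in A)) as [xA'|xA'].
  by rewrite (bool_irrelevance xA' xA).
by rewrite xA in xA'.
Qed.

Lemma piA_sA (A B : {set E}) (t : lterm K (elems B)) :
  piA A (sA t) = lsubst (fun b : elems B => piA_var K A (sval b)) t.
Proof. exact: lsubst_comp. Qed.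

Lemma sAK (A : {set E}) : cancel (@sA K E A) (piA A).
Proof.
by move=> t; rewrite piA_sA -[RHS]lsubst_var; apply: eq_lsubst => a; apply: piA_var_val.
Qed.

End Projections.

Lemma piA_sA_derived0 (K : fieldType) (E : finType) (A B : {set E})
    (Rel : lterm K (elems A) -> Prop) (t : lterm K (elems B)) :
  (#|A :&: B| <= 1)%N -> derived t -> lcong Rel (piA A (sA t)) LZero.
Proof.
move=> AB1 dt; rewrite piA_sA.
have [AB0|[x0 ABx0]] := set_0Vmem (A :&: B).
  apply: (@lsubst_line_derived _ _ _ _ _ LZero) => // b; left.
  apply: piA_var_notin; apply/negP => bA.
  have : sval b \in A :&: B by rewrite inE bA (svalP b).
  by rewrite AB0 inE.
apply: (@lsubst_line_derived _ _ _ _ _ (piA_var K A x0)) => // b.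
have [bA|bA] := boolP (sval b \in A); last by left; apply: piA_var_notin.
have ABb : sval b \in A :&: B by rewrite inE bA (svalP b).
by right; rewrite (card_le1_eqP AB1 _ _ ABb ABx0).
Qed.

Section Arrangement.

Variables (K : fieldType) (E : finType) (Ar : {set {set E}}).
Variable RA : forall A : {set E}, lterm K (elems A) -> Prop.
Arguments RA : clear implicits.
Hypothesis HAr : set_arrangement Ar.

Lemma sA_cong A : A \in Ar ->
  forall t u, lcong (RA A) t u -> lcong (Rtot Ar RA) (sA t) (sA u).
Proof.
by move=> hA; apply: lsubst_cong => r hr; apply: lc_rel; left; exists A => //; exists r.
Qed.

Lemma piA_sA_other A B (Rel : lterm K (elems B) -> Prop) (t : lterm K (elems A)) :
  A \in Ar -> B \in Ar -> A != B -> derived t -> lcong Rel (piA B (sA t)) LZero.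
Proof. by move=> hA hB nAB; apply: piA_sA_derived0; apply: HAr.2; rewrite // eq_sym. Qed.

Lemma piA_cong B :
  (forall A, A \in Ar -> forall r, RA A r -> in_derived_free r) -> B \in Ar ->
  forall t u, lcong (Rtot Ar RA) t u -> lcong (RA B) (piA B t) (piA B u).
Proof.
move=> HRA hB; apply: lsubst_cong => r [[A hA [r' hr' ->]]|[x [y [xy_apart ->]]]].
  rewrite -/(piA B (sA r')); have [<-|nAB] := eqVneq A B.
    by rewrite sAK; apply: lc_rel.
  have [t [dt r't]] := HRA A hA r' hr'.
  have -> : lcong (RA B) (piA B (sA r')) (piA B (sA t)).
    by rewrite !piA_sA; apply: lsubst_cong r't.
  exact: piA_sA_other dt.
have [xB|xB] /= := boolP (x \in B); last by rewrite piA_var_notin // lbr0l.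
have yB : y \notin B by apply/negP => yB; apply: (xy_apart B hB).
by rewrite (piA_var_notin _ yB) lbr0r.
Qed.

Lemma piA_lsum_sA (w : forall A : {set E}, lterm K (elems A)) B
    (Rel : lterm K (elems B) -> Prop) :
  B \in Ar -> (forall A, derived (w A)) ->
  lcong Rel (piA B (lsum (enum Ar) (fun A => sA (w A)))) (w B).
Proof.
move=> hB dw; rewrite /piA lsubst_lsum.
rewrite (@lsum_single _ _ _ _ _ _ B) ?enum_uniq ?mem_enum //.
  by rewrite -/(piA B _) sAK.
by move=> A; rewrite mem_enum => hA nAB; apply: piA_sA_other (dw A).
Qed.

Lemma piA_br_notin_sA A B x (Rel : lterm K (elems B) -> Prop) (t : lterm K (elems A)) :
  A \in Ar -> B \in Ar -> x \notin A -> derived t ->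
  lcong Rel (piA B (LBr (LVar x) (sA t))) LZero.
Proof.
move=> hA hB xA dt; rewrite {1}/piA /= -/(piA B (sA t)).
have [eAB|nAB] := eqVneq A B; first by subst B; rewrite piA_var_notin // lbr0l.
by rewrite (piA_sA_other _ hA hB nAB dt) lbr0r.
Qed.

Definition in_sum_sA (z : lterm K E) : Prop :=
  exists2 w : forall A : {set E}, lterm K (elems A),
    forall A, derived (w A) & lcong (Rtot Ar RA) z (lsum (enum Ar) (fun A => sA (w A))).

Lemma in_sum_sA_cong z z' : lcong (Rtot Ar RA) z z' -> in_sum_sA z -> in_sum_sA z'.
Proof. by move=> zz' [w dw zw]; exists w; rewrite // -zz'. Qed.

Lemma in_sum_sA0 z : lcong (Rtot Ar RA) z LZero -> in_sum_sA z.
Proof.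
move=> z0; exists (fun=> LZero) => [A|]; first exact: der_zero.
by rewrite z0 lsum_eq0.
Qed.

Lemma in_sum_sAD z z' : in_sum_sA z -> in_sum_sA z' -> in_sum_sA (LAdd z z').
Proof.
move=> [w dw zw] [w' dw' zw']; exists (fun A => LAdd (w A) (w' A)) => [A|].
  exact: der_add.
by rewrite zw zw' -lsumD.
Qed.

Lemma in_sum_sAZ k z : in_sum_sA z -> in_sum_sA (LScale k z).
Proof.
move=> [w dw zw]; exists (fun A => LScale k (w A)) => [A|]; first exact: der_scale.
by rewrite zw -lsumZ.
Qed.

Lemma in_sum_sA_brC t u : in_sum_sA (LBr t u) -> in_sum_sA (LBr u t).
Proof. by move/(in_sum_sAZ (-1)); apply: in_sum_sA_cong; rewrite -lbr_anti. Qed.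

Lemma in_sum_sA_br_var x y : in_sum_sA (LBr (LVar x) (LVar y)).
Proof.
have [<-|nxy] := eqVneq x y; first by apply: in_sum_sA0; apply: lc_brtt.
have [/existsP[A /and3P[hA xA yA]]|noA] := boolP [exists A in Ar, (x \in A) && (y \in A)].
  exists (fun B => LBr (piA_var K B x) (piA_var K B y)) => [B|]; first exact: der_br.
  rewrite (@lsum_single _ _ _ _ _ _ A) ?enum_uniq ?mem_enum //.
    by rewrite sA_br !sA_piA_var.
  move=> B; rewrite mem_enum => hB nBA; rewrite sA_br.
  have [xB|xB] := boolP (x \in B); last by rewrite piA_var_notin // lbr0l.
  have [yB|yB] := boolP (y \in B); last by rewrite (piA_var_notin _ yB) lbr0r.
  have BA1 := HAr.2 B A hB hA nBA.
  have := card_le1_eqP BA1 x y; rewrite !inE xB yB xA yA => /(_ isT isT) exy.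
  by rewrite exy eqxx in nxy.
apply: in_sum_sA0; apply: lc_rel; right; exists x, y; split=> // A hA [xA yA].
by move/existsP: noA; apply; exists A; rewrite hA xA yA.
Qed.

Hypothesis br_notin_sA : forall A, A \in Ar -> forall x : E, x \notin A ->
  forall t : lterm K (elems A), derived t -> lcong (Rtot Ar RA) (LBr (LVar x) (sA t)) LZero.

Lemma in_sum_sA_br_varl x z : in_sum_sA z -> in_sum_sA (LBr (LVar x) z).
Proof.
move=> [w dw zw]; exists (fun A => LBr (piA_var K A x) (w A)) => [A|]; first exact: der_br.
rewrite zw lbr_lsumr; apply: eq_lsum => A; rewrite mem_enum => hA; rewrite sA_br.
have [xA|xA] := boolP (x \in A); first by rewrite sA_piA_var.
by rewrite piA_var_notin // br_notin_sA // lbr0l.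
Qed.

Lemma in_sum_sA_brl t z : in_sum_sA z -> in_sum_sA (LBr t z).
Proof.
elim: t z => [x||a IHa b IHb|k a IHa|a IHa b IHb] z zS.
- exact: in_sum_sA_br_varl.
- by apply: in_sum_sA0; apply: lbr0l.
- by apply: in_sum_sA_cong (in_sum_sAD (IHa z zS) (IHb z zS)); rewrite lc_brDl.
- by apply: in_sum_sA_cong (in_sum_sAZ k (IHa z zS)); rewrite lc_brZl.
- have abzS := in_sum_sAD (IHa _ (IHb z zS)) (IHb _ (in_sum_sA_brC (IHa z zS))).
  by apply: in_sum_sA_cong abzS; rewrite lbr_jacobi.
Qed.

Lemma in_sum_sA_br t u : in_sum_sA (LBr t u).
Proof.
elim: u t => [y||a IHa b IHb|k a IHa|a IHa b IHb] t.
- elim: t => [x||a IHa b IHb|k a IHa|a IHa b IHb].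
  + exact: in_sum_sA_br_var.
  + by apply: in_sum_sA0; apply: lbr0l.
  + by apply: in_sum_sA_cong (in_sum_sAD IHa IHb); rewrite lc_brDl.
  + by apply: in_sum_sA_cong (in_sum_sAZ k IHa); rewrite lc_brZl.
  + have abyS := in_sum_sAD (in_sum_sA_brl a IHb) (in_sum_sA_brl b (in_sum_sA_brC IHa)).
    by apply: in_sum_sA_cong abyS; rewrite lbr_jacobi.
- by apply: in_sum_sA0; apply: lbr0r.
- by apply: in_sum_sA_cong (in_sum_sAD (IHa t) (IHb t)); rewrite lc_brDr.
- by apply: in_sum_sA_cong (in_sum_sAZ k (IHa t)); rewrite lc_brZr.
- exact: in_sum_sA_brl.
Qed.

Lemma in_sum_sA_derived z : derived z -> in_sum_sA z.
Proof.
elim=> [|a b _ aS _ bS|k a _ aS|a b]; first exact: in_sum_sA0.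
- exact: in_sum_sAD.
- exact: in_sum_sAZ.
- exact: in_sum_sA_br.
Qed.

End Arrangement.

Theorem mainTheorem1 (K : fieldType) (E : finType) (Ar : {set {set E}})
  (HAr : set_arrangement Ar)
  (RA : forall A : {set E}, lterm K (elems A) -> Prop)
  (HRA : forall A, A \in Ar -> forall r, RA A r -> in_derived_free r) :
  (* I = 0 : every element of L' killed by all pi_A' is zero *)
  (forall z : lterm K E, derived z ->
     (forall A, A \in Ar -> lcong (RA A) (piA A z) LZero) ->
     lcong (Rtot Ar RA) z LZero)
  <->
  (forall A, A \in Ar -> forall x : E, x \notin A ->
     forall t : lterm K (elems A), derived t ->
       lcong (Rtot Ar RA) (LBr (LVar x) (sA t)) LZero).
Proof.
split=> [trivI A hA x xA t dt | br_notin_sA z dz zI].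
  apply: trivI => [|B hB]; first exact: der_br.
  exact: (piA_br_notin_sA HAr _ hA hB xA dt).
have [w dw zw] := in_sum_sA_derived HAr br_notin_sA dz.
rewrite zw; apply: lsum_eq0 => A; rewrite mem_enum => hA.
have wA0 : lcong (RA A) (w A) LZero.
  by rewrite -(piA_lsum_sA HAr _ hA dw) -(piA_cong HAr HRA hA zw); apply: zI.
exact: (sA_cong hA wA0).
Qed.
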